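(* For no choice of a natural number $k$ and nonnegative numbers $p_1,\dots,p_k$ with $p_1+\dots+p_k=1$ does the algorithm MinIndex$(k,p_1,\dots,p_k)$ achieve a guarantee larger than $5/9$ on forests of maximum degree three in the adversarial edge arrival model. That is, for every such parameters and every $\gamma>5/9$ there exists a forest of maximum degree at most three with an edge arrival order and a timepoint $t$ such that $\mathbb{E}[|M|]<\gamma\,\nu(G_t)$, where $M$ is the matching returned by MinIndex at time $t$.
   Context: MinIndex$(k,p_1,\dots,p_k)$: it maintains $k$ matchings $M_1,\dots,M_k$, initially empty. When an edge $e$ arrives: if $M_i\cup\{e\}$ is not a matching for every $i$, $e$ is rejected; otherwise $e$ is added to $M_i$ for the minimal index $i$ such that $M_i\cup\{e\}$ is a matching. At any time, the algorithm's output is the random matching $M$ equal to $M_i$ with probability $p_i$. The guarantee is $\gamma$ if at every timepoint $\mathbb{E}[|M|]\ge\gamma\,\nu(G_t)$, with $\nu(G_t)$ the maximum matching cardinality of the graph of arrived edges $G_t$. *)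

From HB Require Import structures.
From mathcomp Require Import all_boot all_order all_algebra.
From mathcomp Require Import reals.
Set Implicit Arguments. Unset Strict Implicit. Unset Printing Implicit Defensive.
Import Order.TTheory GRing.Theory Num.Theory.

(* Graphs: vertices are natural numbers, an undirected edge {u,v} is a pair (u,v).
   A graph with an edge arrival order is a sequence s of edges (arrival order =
   order in s); G_t is the graph of the first t edges, [take t s]. *)

Definition edge := (nat * nat)%type.

Definition edge_disj (e f : edge) : bool :=
  [&& e.1 != f.1, e.1 != f.2, e.2 != f.1 & e.2 != f.2].

Definition is_matching (M : seq edge) : bool := pairwise edge_disj M.

Definition simple_graph (s : seq edge) : bool :=
  all (fun e => e.1 != e.2) s &&
  uniq [seq (minn e.1 e.2, maxn e.1 e.2) | e <- s].

Definition adj (s : seq edge) : rel nat :=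
  fun u v => ((u, v) \in s) || ((v, u) \in s).

Definition forest (s : seq edge) : Prop :=
  forall c : seq nat, uniq c -> 2 < size c -> ~~ cycle (adj s) c.

Definition degree (s : seq edge) (v : nat) : nat :=
  count (fun e : edge => (e.1 == v) || (e.2 == v)) s.

Definition max_deg_le (d : nat) (s : seq edge) : Prop :=
  forall v, degree s v <= d.

Definition nu (s : seq edge) : nat :=
  \max_(b : (size s).-tuple bool | is_matching (mask b s)) size (mask b s).

Fixpoint mi_insert (e : edge) (Ms : seq (seq edge)) : seq (seq edge) :=
  match Ms with
  | [::] => [::]
  | M :: Ms' => if is_matching (e :: M) then (e :: M) :: Ms'
                else M :: mi_insert e Ms'
  end.

Definition minindex_run (k : nat) (s : seq edge) : seq (seq edge) :=
  foldl (fun Ms e => mi_insert e Ms) (nseq k [::]) s.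

(* E[|M|] where M = M_i with probability p_i *)
Definition minindex_expected (R : realType) (k : nat) (p : 'I_k -> R)
    (s : seq edge) : R :=
  \sum_(i < k) p i * (size (nth [::] (minindex_run k s) i))%:R.

From HB Require Import structures.
From mathcomp Require Import all_boot all_order all_algebra.
From mathcomp Require Import reals.
From mathcomp Require Import zify lra.
Import Order.TTheory GRing.Theory Num.Theory.

Set Implicit Arguments.
Unset Strict Implicit.
Unset Printing Implicit Defensive.

(* The adversary concatenates n shifted copies of a fixed tree gadget of 17
   edges, each attached at its entry vertex 0 to the exit vertex 18 of the
   previous copy.  When a copy arrives, the only old edge its edges can meet is
   the edge at the entry vertex, which lies in M_1; hence MinIndex treats every
   copy the same way and adds 5, 5, 5 and 2 of its edges to M_1, ..., M_4 and
   nothing to the other matchings, so every M_i has at most 5n + 1 edges.  A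
   single copy contains a matching of 9 edges avoiding its entry vertex, so
   nu >= 9n, and E[|M|] <= 5n + 1 < gamma * 9n once n is large. *)

Definition shift (b : nat) (e : edge) : edge := (e.1 + b, e.2 + b).

Definition touches (v : nat) (e : edge) : bool := (e.1 == v) || (e.2 == v).

Definition below (b : nat) (M : seq edge) : bool :=
  all (fun e : edge => (e.1 < b) && (e.2 < b)) M.

Lemma shift_inj b : injective (shift b).
Proof. by case=> x y [u v] [] /addIn -> /addIn ->. Qed.

Lemma edge_disj_shift b e f : edge_disj (shift b e) (shift b f) = edge_disj e f.
Proof. by rewrite /edge_disj /= !eqn_add2r. Qed.

Lemma touches_shift v b e : touches (v + b) (shift b e) = touches v e.
Proof. by rewrite /touches /= !eqn_add2r. Qed.

Lemma has_touches_shift v b X :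
  has (touches (v + b)) (map (shift b) X) = has (touches v) X.
Proof. by rewrite has_map; apply: eq_has => e; exact: touches_shift. Qed.

Lemma is_matching_cons e M :
  is_matching (e :: M) = all (edge_disj e) M && is_matching M.
Proof. by []. Qed.

Lemma is_matching_shift b X : is_matching (map (shift b) X) = is_matching X.
Proof. by rewrite /is_matching pairwise_map; apply: eq_pairwise => e f; apply: edge_disj_shift. Qed.

Lemma is_matching_cat_shift b L X : below b L ->
  is_matching (L ++ map (shift b) X) = is_matching L && is_matching X.
Proof.
move=> /allP below_L; rewrite /is_matching pairwise_cat -!/(is_matching _) is_matching_shift.
suff -> : allrel edge_disj L (map (shift b) X) by [].
apply/allrelP => l y /below_L /andP[l1 l2] /mapP[x _ ->].
by rewrite /edge_disj; apply/and4P; split; apply/eqP; rewrite /=; lia.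
Qed.

Lemma below_cat b X Y : below b (X ++ Y) = below b X && below b Y.
Proof. exact: all_cat. Qed.

Lemma below_shift c b X : below c X -> below (c + b) (map (shift b) X).
Proof. by rewrite /below all_map; apply: sub_all => e /=; rewrite !ltn_add2r. Qed.

Lemma below_le b b' M : b <= b' -> below b M -> below b' M.
Proof. by move=> le; apply: sub_all => e /andP[e1 e2]; rewrite !(leq_trans _ le). Qed.

Lemma below_edge_disj b g M :
  below b M -> b <= g.1 -> b <= g.2 -> all (edge_disj g) M.
Proof.
move=> /allP bM g1 g2; apply/allP => e /bM /andP[e1 e2].
by rewrite /edge_disj; apply/and4P; split; apply/eqP; lia.
Qed.

Lemma below_touches b v M : below b M -> b <= v -> ~~ has (touches v) M.
Proof.
move=> /allP bM le; apply/hasPn => e /bM /andP[e1 e2].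
by rewrite /touches negb_or; apply/andP; split; apply/eqP; lia.
Qed.

Lemma has_touches_edge_disj v g M :
  has (touches v) M -> touches v g -> all (edge_disj g) M = false.
Proof.
case/hasP => e eM te tg; apply/negbTE/allPn; exists e => //.
move: te tg; rewrite /touches /edge_disj.
by case/orP => /eqP ->; case/orP => /eqP ->; rewrite ?eqxx ?andbF.
Qed.

Lemma size_mask_le_nu s (m : seq bool) :
  size m = size s -> is_matching (mask m s) -> size (mask m s) <= nu s.
Proof.
move=> sz match_m; have szb : size m == size s by apply/eqP.
exact: (@leq_bigmax_cond _ (fun b : (size s).-tuple bool => is_matching (mask b s))
          (fun b => size (mask b s)) (Tuple szb) match_m).
Qed.

Lemma degree_cat s1 s2 v : degree (s1 ++ s2) v = degree s1 v + degree s2 v.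
Proof. exact: count_cat. Qed.

Lemma degree_below b v M : below b M -> b <= v -> degree M v = 0.
Proof. by move=> bM le; apply/eqP; rewrite -leqn0 leqNgt -has_count (below_touches bM le). Qed.

Lemma degree_shift_lt v b X : v < b -> degree (map (shift b) X) v = 0.
Proof.
move=> lt; apply/eqP; rewrite -leqn0 leqNgt -has_count; apply/hasPn => e /mapP[x _ ->].
by rewrite /= negb_or; apply/andP; split; apply/eqP; rewrite /=; lia.
Qed.

Lemma degree_shift_ge v b X : b <= v -> degree (map (shift b) X) v = degree X (v - b).
Proof.
move=> le; rewrite /degree count_map; apply: eq_count => x /=.
by rewrite -[v in LHS](subnK le) !eqn_add2r.
Qed.

Definition mi_step (Ms : seq (seq edge)) (e : edge) : seq (seq edge) := mi_insert e Ms.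

Lemma take_mi_insert e k Ms : take k (mi_insert e Ms) = mi_insert e (take k Ms).
Proof.
elim: Ms k => [|M Ms IH] [|k] //=; case: ifP => _ //=.
by rewrite IH.
Qed.

Lemma take_foldl_mi_step k s Ms :
  take k (foldl mi_step Ms s) = foldl mi_step (take k Ms) s.
Proof. by elim: s Ms => [|e s IH] Ms //=; rewrite IH /mi_step take_mi_insert. Qed.

Lemma mi_insert_matchings e Ms : all is_matching Ms -> all is_matching (mi_insert e Ms).
Proof.
elim: Ms => [|M Ms IH] //= /andP[match_M match_Ms].
by case: ifP => match_eM /=; rewrite ?match_eM ?match_Ms ?match_M ?IH.
Qed.

Lemma foldl_mi_step_matchings s Ms :
  all is_matching Ms -> all is_matching (foldl mi_step Ms s).
Proof. by elim: s Ms => [|e s IH] Ms //= h; apply/IH/mi_insert_matchings. Qed.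

Local Open Scope ring_scope.

Lemma minindex_expected_le (R : realType) k (p : 'I_k -> R) s m :
  (forall i, 0 <= p i) -> \sum_(i < k) p i = 1 ->
  (forall i, (i < k)%N -> (size (nth [::] (minindex_run k s) i) <= m)%N) ->
  minindex_expected p s <= m%:R.
Proof.
move=> p_ge0 p_sum1 size_le.
apply: (@le_trans _ _ (\sum_(i < k) p i * m%:R)).
  by apply: ler_sum => i _; rewrite ler_wpM2l // ler_nat size_le.
by rewrite -mulr_suml p_sum1 mul1r.
Qed.

Local Close Scope ring_scope.

Definition gadget : seq edge :=
  [:: (0,1); (0,2); (3,18); (1,3); (4,5); (1,4); (7,8); (6,7); (3,6); (7,9);
      (8,10); (5,11); (5,12); (11,13); (11,14); (13,15); (16,17)].

Definition gadget_matching_mask : seq bool :=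
  [:: false; true; false; false; false; true; false; false; true; true; true;
      false; true; false; true; true; true].

Definition gadget_M1 : seq edge := [:: (16, 17); (11, 13); (7, 8); (4, 5); (3, 18)].
Definition gadget_M2 : seq edge := [:: (13, 15); (5, 11); (8, 10); (6, 7); (0, 1)].
Definition gadget_M3 : seq edge := [:: (11, 14); (5, 12); (7, 9); (1, 3); (0, 2)].
Definition gadget_M4 : seq edge := [:: (3, 6); (1, 4)].

(* The state seen by a fresh copy of the gadget: the old edge of M_1 at the
   entry vertex is represented by (19, 0), whose other endpoint lies outside
   the gadget. *)
Definition abstract_state (k : nat) : seq (seq edge) :=
  [:: [:: (19, 0)], [::], [::], [::] & nseq k [::]].

Lemma abstract_run k :
  foldl mi_step (abstract_state k) gadget =
  [:: gadget_M1 ++ [:: (19, 0)], gadget_M2 ++ [::], gadget_M3 ++ [::],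
      gadget_M4 ++ [::] & nseq k [::]].
Proof. reflexivity. Qed.

Lemma gadget_edges_nonzero : all (fun e : edge => 0 < e.1 + e.2) gadget.
Proof. by []. Qed.

Lemma gadget_below : below 19 gadget.
Proof. by []. Qed.

Lemma gadget_degree w : degree gadget w <= 3.
Proof.
have [lt19|ge19] := ltnP w 19; last by rewrite (degree_below gadget_below).
have : all (fun w => degree gadget w <= 3) (iota 0 19) by [].
by move/allP/(_ w); rewrite mem_iota; apply.
Qed.

Section GadgetSimulation.

Variable b : nat.

(* Q (old edges of a real matching) and C (its abstract stand-in) look the same
   to every edge of the copy of the gadget shifted by b. *)
Definition same_view (Q C : seq edge) : Prop :=
  [/\ is_matching Q, is_matching C &
      forall f, f \in gadget -> all (edge_disj (shift b f)) Q = all (edge_disj f) C].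

(* Each real matching in Ms is a list X of shifted gadget edges on top of its
   old content in Os, and the corresponding abstract matching in Cs is X on top
   of its abstract old content in COs. *)
Fixpoint simulates (Ms Os Cs COs : seq (seq edge)) : Prop :=
  match Ms, Os, Cs, COs with
  | [::], [::], [::], [::] => True
  | A :: Ms, Q :: Os, C :: Cs, CO :: COs =>
      [/\ exists2 X, all (mem gadget) X & A = map (shift b) X ++ Q /\ C = X ++ CO,
          same_view Q CO & simulates Ms Os Cs COs]
  | _, _, _, _ => False
  end.

Lemma is_matching_cons_shift e X Q CO :
  e \in gadget -> all (mem gadget) X -> same_view Q CO ->
  is_matching (shift b e :: map (shift b) X ++ Q) = is_matching (e :: X ++ CO).
Proof.
move=> e_gadget /allP X_gadget [match_Q match_CO view].
rewrite !is_matching_cons !all_cat /is_matching !pairwise_cat -!/(is_matching _).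
rewrite match_Q match_CO -/(is_matching _) is_matching_shift all_map view //.
rewrite (eq_all (a2 := edge_disj e)); last by move=> f /=; rewrite edge_disj_shift.
congr (_ && (_ && _)); rewrite /allrel all_map; apply: eq_in_all => f fX /=.
exact/view/X_gadget.
Qed.

Lemma mi_insert_simulates e Ms Os Cs COs : e \in gadget ->
  simulates Ms Os Cs COs ->
  simulates (mi_insert (shift b e) Ms) Os (mi_insert e Cs) COs.
Proof.
move=> e_gadget; elim: Ms Os Cs COs => [|A Ms IH] [|Q Os] [|C Cs] [|CO COs] //=.
case=> [[X X_gadget [-> ->]] view sim].
rewrite -!is_matching_cons (is_matching_cons_shift e_gadget X_gadget view).
case: ifP => _ /=; last by split=> //; [exists X | apply: IH].
by split=> //; exists (e :: X); rewrite /= ?e_gadget.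
Qed.

Lemma foldl_simulates L Ms Os Cs COs : all (mem gadget) L ->
  simulates Ms Os Cs COs ->
  simulates (foldl mi_step Ms (map (shift b) L)) Os (foldl mi_step Cs L) COs.
Proof.
elim: L Ms Cs => [|e L IH] Ms Cs //= /andP[e_gadget L_gadget] sim.
exact/IH/mi_insert_simulates.
Qed.

Lemma simulates_cons Q CO Os COs :
  same_view Q CO -> simulates Os Os COs COs ->
  simulates (Q :: Os) (Q :: Os) (CO :: COs) (CO :: COs).
Proof. by move=> view sim; split=> //; exists [::]. Qed.

Lemma simulates_nseq k : simulates (nseq k [::]) (nseq k [::]) (nseq k [::]) (nseq k [::]).
Proof. by elim: k => //= k IH; apply: simulates_cons. Qed.

Lemma simulatesE Ms Q Os X CO Cs COs :
  simulates Ms (Q :: Os) ((X ++ CO) :: Cs) (CO :: COs) ->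
  Ms = (map (shift b) X ++ Q) :: behead Ms /\ simulates (behead Ms) Os Cs COs.
Proof.
case: Ms => [|A Ms] // [[X' _ [-> E]] _ sim]; split=> //.
have /addIn sz : size X' + size CO = size X + size CO by rewrite -!size_cat E.
by move/eqP: E; rewrite eqseq_cat // => /andP[/eqP ->].
Qed.

Lemma simulates_nseqE Ms k :
  simulates Ms (nseq k [::]) (nseq k [::]) (nseq k [::]) -> Ms = nseq k [::].
Proof.
elim: k Ms => [|k IH] [|A Ms] //= [[X _ [-> E]] _ sim].
by case: X E => // _; rewrite cats0 (IH _ sim).
Qed.

Lemma same_view_entry M : is_matching M -> below b.+1 M -> has (touches b) M ->
  same_view M [:: (19, 0)].
Proof.
move=> match_M below_M touch_M; split=> // f f_gadget.
have view19 : all (fun f => all (edge_disj f) [:: (19, 0)] == ~~ touches 0 f) gadget by [].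
rewrite (eqP (allP view19 f f_gadget)).
have [t0|not_t0] /= := boolP (touches 0 f).
  by apply: has_touches_edge_disj touch_M _; rewrite -(add0n b) touches_shift.
move: not_t0; rewrite /touches negb_or => /andP[f1 f2].
by apply: below_edge_disj below_M _ _; rewrite /=; lia.
Qed.

Lemma same_view_below M : is_matching M -> below b M -> same_view M [::].
Proof.
by move=> match_M below_M; split=> // f _; apply: below_edge_disj below_M _ _; rewrite /=; lia.
Qed.

Lemma simulates_gadget_run k Ms M1 M2 M3 M4 :
  simulates Ms [:: M1, M2, M3, M4 & nseq k [::]]
            (foldl mi_step (abstract_state k) gadget) (abstract_state k) ->
  Ms = [:: map (shift b) gadget_M1 ++ M1, map (shift b) gadget_M2 ++ M2,
           map (shift b) gadget_M3 ++ M3, map (shift b) gadget_M4 ++ M4 & nseq k [::]].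
Proof.
rewrite abstract_run.
move=> /simulatesE[E1 /simulatesE[E2 /simulatesE[E3 /simulatesE[E4 /simulates_nseqE E5]]]].
by rewrite E1 E2 E3 E4 E5.
Qed.

Lemma gadget_step k M1 M2 M3 M4 :
  all is_matching [:: M1, M2, M3, M4 & nseq k [::]] ->
  below b.+1 M1 -> has (touches b) M1 -> below b M2 -> below b M3 -> below b M4 ->
  foldl mi_step [:: M1, M2, M3, M4 & nseq k [::]] (map (shift b) gadget) =
  [:: map (shift b) gadget_M1 ++ M1, map (shift b) gadget_M2 ++ M2,
      map (shift b) gadget_M3 ++ M3, map (shift b) gadget_M4 ++ M4 & nseq k [::]].
Proof.
move=> /and5P[m1 m2 m3 m4 _] b1 t1 b2 b3 b4.
have start : simulates [:: M1, M2, M3, M4 & nseq k [::]] [:: M1, M2, M3, M4 & nseq k [::]]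
                       (abstract_state k) (abstract_state k).
  apply: simulates_cons; first exact: same_view_entry.
  do 3 (apply: simulates_cons; first exact: same_view_below).
  exact: simulates_nseq.
exact: (simulates_gadget_run (foldl_simulates (allss gadget) start)).
Qed.

End GadgetSimulation.

Definition offset (n : nat) : nat := 18 * n + 1.

Lemma offsetS n : offset n.+1 = offset n + 18.
Proof. rewrite /offset; lia. Qed.

Fixpoint chain (n : nat) : seq edge :=
  if n is n'.+1 then chain n' ++ map (shift (offset n')) gadget else [:: (0, 1)].

Fixpoint chain_matching_mask (n : nat) : seq bool :=
  if n is n'.+1 then chain_matching_mask n' ++ gadget_matching_mask else [:: false].

Lemma chainS n : chain n.+1 = chain n ++ map (shift (offset n)) gadget.
Proof. by []. Qed.

Lemma chain_matching_maskS n :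
  chain_matching_mask n.+1 = chain_matching_mask n ++ gadget_matching_mask.
Proof. by []. Qed.

Lemma size_chain_matching_mask n : size (chain_matching_mask n) = size (chain n).
Proof. by elim: n => // n IH; rewrite !size_cat IH size_map. Qed.

Lemma chain_run k n : exists M1 M2 M3 M4,
  [/\ foldl mi_step (nseq k.+4 [::]) (chain n) = [:: M1, M2, M3, M4 & nseq k [::]],
      [/\ size M1 = 5 * n + 1, size M2 = 5 * n, size M3 = 5 * n & size M4 = 2 * n] &
      [/\ below (offset n).+1 M1, has (touches (offset n)) M1,
          below (offset n) M2, below (offset n) M3 & below (offset n) M4]].
Proof.
elim: n => [|n [M1 [M2 [M3 [M4 [run [s1 s2 s3 s4] [b1 t1 b2 b3 b4]]]]]]].
  by exists [:: (0, 1)], [::], [::], [::].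
have matchings : all is_matching [:: M1, M2, M3, M4 & nseq k [::]].
  by rewrite -run foldl_mi_step_matchings // all_nseq.
rewrite offsetS; set b := offset n.
have shifted_below c X : below c X -> below (b + c) (map (shift b) X).
  by rewrite addnC; apply: below_shift.
exists (map (shift b) gadget_M1 ++ M1), (map (shift b) gadget_M2 ++ M2),
       (map (shift b) gadget_M3 ++ M3), (map (shift b) gadget_M4 ++ M4).
rewrite chainS foldl_cat run gadget_step //.
split=> //.
  by rewrite !size_cat !size_map s1 s2 s3 s4 /gadget_M1 /gadget_M2 /gadget_M3 /gadget_M4 /=; split; lia.
rewrite !below_cat (below_le _ b1) ?(below_le _ b2) ?(below_le _ b3) ?(below_le _ b4)
  ?ltnS ?leq_addr // !andbT -addnS !shifted_below //.
by split=> //; rewrite has_cat addnC has_touches_shift.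
Qed.

Lemma minindex_run_chain_size k n i :
  i < k -> size (nth [::] (minindex_run k (chain n)) i) <= 5 * n + 1.
Proof.
move=> lt_ik; have [M1 [M2 [M3 [M4 [run [s1 s2 s3 s4] _]]]]] := chain_run k n.
(* MinIndex with k matchings is the truncation of MinIndex with k + 4, so
   k < 4 needs no separate treatment. *)
have -> : minindex_run k (chain n) = take k (foldl mi_step (nseq k.+4 [::]) (chain n)).
  by rewrite take_foldl_mi_step take_nseq // -addn4 leq_addr.
rewrite nth_take // run.
case: i {lt_ik} => [|[|[|[|i]]]] /=; rewrite ?s1 ?s2 ?s3 ?s4; try lia.
by rewrite nth_nseq if_same.
Qed.

Lemma chain_matching n :
  [/\ is_matching (mask (chain_matching_mask n) (chain n)),
      below (offset n) (mask (chain_matching_mask n) (chain n)) &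
      size (mask (chain_matching_mask n) (chain n)) = 9 * n].
Proof.
elim: n => [//|n [match_n below_n size_n]].
rewrite chainS chain_matching_maskS mask_cat ?size_chain_matching_mask //.
rewrite -map_mask offsetS.
split.
- by rewrite (is_matching_cat_shift _ below_n) match_n.
- by rewrite below_cat (below_le _ below_n) ?leq_addr // addnC; apply: below_shift.
- by rewrite size_cat size_map size_n /=; lia.
Qed.

Lemma nu_chain n : 9 * n <= nu (chain n).
Proof.
have [match_n _ <-] := chain_matching n.
exact/size_mask_le_nu/match_n/size_chain_matching_mask.
Qed.

Lemma chain_degree n :
  [/\ max_deg_le 3 (chain n), degree (chain n) (offset n) = 1 & below (offset n).+1 (chain n)].
Proof.
elim: n => [|n [deg_le3 deg_exit below_n]].
  by split=> // v; rewrite /degree /=; case: (0 == v); case: (1 == v).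
rewrite chainS offsetS; set b := offset n.
have exit_le : b <= b + 18 by apply: leq_addr.
split.
- move=> v; rewrite degree_cat; case: (ltngtP v b) => [lt_vb|lt_bv|->].
  + by rewrite (degree_shift_lt _ lt_vb) addn0.
  + by rewrite (degree_below below_n lt_bv) (degree_shift_ge _ (ltnW lt_bv)) gadget_degree.
  + by rewrite deg_exit (degree_shift_ge _ (leqnn b)) subnn.
- have exit_gt : b < b + 18 by rewrite -addn1 leq_add2l.
  by rewrite degree_cat (degree_below below_n exit_gt) (degree_shift_ge _ exit_le) addKn.
- rewrite below_cat (below_le _ below_n) ?ltnS // -addnS addnC.
  exact: below_shift gadget_below.
Qed.

Definition normalize (e : edge) : edge := (minn e.1 e.2, maxn e.1 e.2).

Lemma normalize_shift b e : normalize (shift b e) = shift b (normalize e).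
Proof. by rewrite /normalize /shift /= -addn_minl -addn_maxl. Qed.

Lemma simple_graph_chain n : simple_graph (chain n).
Proof.
elim: n => [//|n IH]; have [_ _ below_n] := chain_degree n; set b := offset n.
move: IH; rewrite /simple_graph chainS all_cat map_cat cat_uniq => /andP[-> ->].
have no_loops_block : all (fun e : edge => e.1 != e.2) (map (shift b) gadget).
  by rewrite all_map; apply/allP => e e_in; rewrite /= eqn_add2r; move: e e_in; apply/allP.
rewrite no_loops_block -map_comp (eq_map (normalize_shift b)) map_comp.
rewrite (map_inj_uniq (@shift_inj b)) !andTb; apply/andP; split; last by [].
apply/hasPn => _ /mapP[_ /mapP[e e_gadget ->] ->]; apply/negP => /mapP[f f_chain].
rewrite /normalize /shift /= => -[min_eq max_eq].
move/allP: below_n => /(_ f f_chain) /andP[f1 f2].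
have := allP gadget_edges_nonzero e e_gadget; lia.
Qed.

Lemma forest_nil : forest [::].
Proof. by move=> [|x [|y [|z c]]]. Qed.

Lemma forest_perm s1 s2 : perm_eq s1 s2 -> forest s1 -> forest s2.
Proof.
move=> s12 forest_s1 c uniq_c size_c.
by rewrite -(eq_cycle (e := adj s1)) ?forest_s1 // => u v; rewrite /adj !(perm_mem s12).
Qed.

(* A cycle through the new leaf y would need two distinct neighbours of y. *)
Lemma forest_cons_leaf x y s :
  forest s -> x != y -> ~~ has (touches y) s -> forest ((x, y) :: s).
Proof.
move=> forest_s xy y_fresh c uniq_c size_c; apply/negP => cycle_c.
have y_nbr z : adj ((x, y) :: s) y z || adj ((x, y) :: s) z y -> z = x.
  have [//|zx] := eqVneq z x; have y_out u v : (u, v) \in s -> (u != y) && (v != y).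
    by move=> uv; move/hasPn: y_fresh => /(_ _ uv); rewrite /touches negb_or.
  rewrite /adj !in_cons !xpair_eqE (eq_sym y x) (negbTE xy) (negbTE zx) /=.
  by case/orP=> /orP[] /y_out /andP[]; rewrite eqxx.
have [y_c|y_notin_c] := boolP (y \in c).
  case/rot_to: y_c => i c' rot_c.
  have : cycle (adj ((x, y) :: s)) (y :: c') by rewrite -rot_c rot_cycle.
  have : uniq (y :: c') by rewrite -rot_c rot_uniq.
  have : 2 < size (y :: c') by rewrite -rot_c size_rot.
  case: c' {rot_c} => [|z1 [|z2 w]] // _ /and3P[_ /negP z1_notin _].
  rewrite /cycle rcons_path => /andP[/= /andP[a1 _] a2].
  apply: z1_notin; rewrite (y_nbr z1) ?a1 // -(y_nbr (last z2 w)) ?a2 ?orbT //.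
  exact: mem_last.
apply: (negP (forest_s c uniq_c size_c)).
apply: (@sub_in_cycle _ (predC1 y) (adj ((x, y) :: s))) cycle_c.
  move=> u v; rewrite !inE => uy vy.
  by rewrite /adj !in_cons !xpair_eqE (negbTE vy) (negbTE uy) !andbF.
by apply/allP => v v_c; rewrite inE; apply: contraNneq y_notin_c => <-.
Qed.

Fixpoint leaf_extension (L s : seq edge) : bool :=
  if L is e :: L' then [&& e.1 != e.2, ~~ has (touches e.2) (L' ++ s) & leaf_extension L' s]
  else true.

Lemma forest_leaf_extension L s : forest s -> leaf_extension L s -> forest (L ++ s).
Proof.
elim: L => [|[x y] L IH] //= forest_s /and3P[xy y_fresh ext].
exact/forest_cons_leaf/y_fresh/xy/IH.
Qed.

Lemma leaf_extension_shift b L s :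
  leaf_extension L [::] -> all (fun e : edge => 0 < e.2) L -> below b.+1 s ->
  leaf_extension (map (shift b) L) s.
Proof.
move=> + + below_s; elim: L => [|e L IH] //= /and3P[e12 e_fresh ext] /andP[e2 pos].
have shifted_gt : b < e.2 + b by rewrite -{1}(add0n b) ltn_add2r.
rewrite eqn_add2r e12 IH // andbT has_cat has_touches_shift -(cats0 L) (negbTE e_fresh).
by rewrite (negbTE (below_touches below_s shifted_gt)).
Qed.

Definition gadget_leaf_order : seq edge :=
  [:: (16,17); (13,15); (11,14); (11,13); (5,12); (5,11); (8,10); (7,9); (7,8);
      (6,7); (3,6); (4,5); (1,4); (3,18); (1,3); (0,2); (0,1)].

Lemma forest_chain n : forest (chain n).
Proof.
elim: n => [|n IH]; first exact: (@forest_leaf_extension [:: (0, 1)] _ forest_nil).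
have [_ _ below_n] := chain_degree n.
apply: (@forest_perm (map (shift (offset n)) gadget_leaf_order ++ chain n)).
  by rewrite perm_catC; apply/perm_cat/perm_map.
exact/forest_leaf_extension/leaf_extension_shift.
Qed.

Local Open Scope ring_scope.

Theorem mainTheorem4 (R : realType) (k : nat) (p : 'I_k -> R) :
  (forall i, 0 <= p i) -> \sum_(i < k) p i = 1 ->
  forall gamma : R, 5 / 9 < gamma ->
  exists (s : seq edge) (t : nat),
    [/\ simple_graph s, forest s, max_deg_le 3 s, (t <= size s)%N &
        minindex_expected p (take t s) < gamma * (nu (take t s))%:R].
Proof.
move=> p_ge0 p_sum1 gamma gamma_gt.
set d := 9 * gamma - 5; have d_gt0 : 0 < d by rewrite /d; lra.
set n := (Num.truncn d^-1).+1.
have n_large : 1 < n%:R * d by rewrite -ltr_pdivrMr // div1r truncnS_gt.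
have [deg_le3 _ _] := chain_degree n.
exists (chain n), (size (chain n)); rewrite take_size; split=> //.
- exact: simple_graph_chain.
- exact: forest_chain.
apply: (le_lt_trans (minindex_expected_le p_ge0 p_sum1 (@minindex_run_chain_size k n))).
apply: (@lt_le_trans _ _ (gamma * (9 * n)%:R)).
  by rewrite !natrD !natrM; move: n_large; rewrite /d; nra.
by rewrite ler_pM2l ?ler_nat ?nu_chain //; lra.
Qed.
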